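(* For each integer $n\geq 6$ there exists a closed non-degenerate spherical $n$-gon whose lifted rolling monodromy for radius ratio $\rho=3$ is trivial.
   Context: A spherical polygon on the unit sphere $S^2$ has edges that are arcs of great circles; it is non-degenerate if no three consecutive vertices lie on a great circle. Identify $\mathbb{R}^3$ with the imaginary quaternions. For radius ratio $\rho$ (stationary radius over moving radius), rolling along the polygon is the curve $(\mathbf v(t),q(t))\in S^2\times S^3$ with $\mathbf v(t)$ traversing the polygon once, $q(0)=1$, and $(\rho+1)\dot{\mathbf v}=\boldsymbol\omega\times\mathbf v$, $\boldsymbol\omega\cdot\mathbf v=0$, where $\boldsymbol\omega=2\dot q\bar q$ (the angular velocity of the rotation $\mathbf x\mapsto q\mathbf x\bar q$). The lifted rolling monodromy is the final value of $q$; it is trivial if it equals $1$. *)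

From Stdlib Require Import Reals Lra Arith.
From Coquelicot Require Import Coquelicot.
Open Scope R_scope.

(** Vectors of R^3 (identified with imaginary quaternions) *)
Record vec3 := V3 { x1 : R; x2 : R; x3 : R }.

Definition dot (a b : vec3) : R := x1 a * x1 b + x2 a * x2 b + x3 a * x3 b.
Definition cross (a b : vec3) : vec3 :=
  V3 (x2 a * x3 b - x3 a * x2 b)
     (x3 a * x1 b - x1 a * x3 b)
     (x1 a * x2 b - x2 a * x1 b).
Definition vadd (a b : vec3) : vec3 := V3 (x1 a + x1 b) (x2 a + x2 b) (x3 a + x3 b).
Definition vscale (c : R) (a : vec3) : vec3 := V3 (c * x1 a) (c * x2 a) (c * x3 a).
Definition det3 (a b c : vec3) : R := dot a (cross b c).

Definition on_S2 (v : vec3) : Prop := dot v v = 1.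

Record quat := Q { qr : R; qi : R; qj : R; qk : R }.

Definition qmul (p q : quat) : quat :=
  Q (qr p * qr q - qi p * qi q - qj p * qj q - qk p * qk q)
    (qr p * qi q + qi p * qr q + qj p * qk q - qk p * qj q)
    (qr p * qj q - qi p * qk q + qj p * qr q + qk p * qi q)
    (qr p * qk q + qi p * qj q - qj p * qi q + qk p * qr q).
Definition qconj (q : quat) : quat := Q (qr q) (- qi q) (- qj q) (- qk q).
Definition qscale (c : R) (q : quat) : quat := Q (c * qr q) (c * qi q) (c * qj q) (c * qk q).
Definition qone : quat := Q 1 0 0 0.
Definition on_S3 (q : quat) : Prop :=
  qr q * qr q + qi q * qi q + qj q * qj q + qk q * qk q = 1.
Definition qim (q : quat) : vec3 := V3 (qi q) (qj q) (qk q).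

Definition vderive (v : R -> vec3) (t : R) (dv : vec3) : Prop :=
  is_derive (fun s => x1 (v s)) t (x1 dv) /\
  is_derive (fun s => x2 (v s)) t (x2 dv) /\
  is_derive (fun s => x3 (v s)) t (x3 dv).
Definition qderive (q : R -> quat) (t : R) (dq : quat) : Prop :=
  is_derive (fun s => qr (q s)) t (qr dq) /\
  is_derive (fun s => qi (q s)) t (qi dq) /\
  is_derive (fun s => qj (q s)) t (qj dq) /\
  is_derive (fun s => qk (q s)) t (qk dq).

Definition rcont_on (a b : R) (f : R -> R) : Prop :=
  forall x, a <= x <= b ->
    filterlim f (within (fun s => a <= s <= b) (locally x)) (locally (f x)).
Definition qcont_on (a b : R) (q : R -> quat) : Prop :=
  rcont_on a b (fun s => qr (q s)) /\ rcont_on a b (fun s => qi (q s)) /\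
  rcont_on a b (fun s => qj (q s)) /\ rcont_on a b (fun s => qk (q s)).

(** Spherical n-gon: vertices P 0, ..., P (n-1), indices taken mod n (closed). *)
Definition vert (n : nat) (P : nat -> vec3) (i : nat) : vec3 := P (Nat.modulo i n).

(** closed non-degenerate spherical n-gon: all vertices on S^2, and no three
    cyclically consecutive vertices on a great circle (i.e. coplanar with 0). *)
Definition nondeg_polygon (n : nat) (P : nat -> vec3) : Prop :=
  (3 <= n)%nat /\
  (forall i, (i < n)%nat -> on_S2 (P i)) /\
  (forall i, (i < n)%nat ->
     det3 (vert n P i) (vert n P (i + 1)) (vert n P (i + 2)) <> 0).

(** The (minor) great-circle arc from a to b:
    arc a b s = cos s * a + sin s * u, with u the unit vector in the direction
    of the component of b orthogonal to a, for 0 <= s <= arclen a b. *)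
Definition arclen (a b : vec3) : R := acos (dot a b).
Definition arcdir (a b : vec3) : vec3 :=
  vscale (/ sqrt (1 - dot a b * dot a b)) (vadd b (vscale (- dot a b) a)).
Definition arc (a b : vec3) (s : R) : vec3 :=
  vadd (vscale (cos s) a) (vscale (sin s) (arcdir a b)).

Definition traverses (n : nat) (P : nat -> vec3) (tt : nat -> R)
    (v : R -> vec3) : Prop :=
  tt 0%nat = 0 /\ tt n = 1 /\
  (forall i, (i < n)%nat -> tt i < tt (S i)) /\
  (forall i, (i < n)%nat ->
     exists phi : R -> R,
       phi (tt i) = 0 /\
       phi (tt (S i)) = arclen (vert n P i) (vert n P (S i)) /\
       (forall s u, tt i <= s -> s <= u -> u <= tt (S i) -> phi s <= phi u) /\
       rcont_on (tt i) (tt (S i)) phi /\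
       (forall s, tt i < s < tt (S i) -> ex_derive phi s) /\
       (forall s, tt i <= s <= tt (S i) ->
          v s = arc (vert n P i) (vert n P (S i)) (phi s))).

(** Rolling along the polygon with radius ratio rho: the curve
    (v(t), q(t)) in S^2 x S^3, t in [0,1], with v traversing the polygon once,
    q(0) = 1, q continuous, and on each open edge-interval
    (rho+1) v' = omega x v, omega . v = 0, where omega = 2 q' conj(q)
    (required to be an imaginary quaternion, identified with a vector). *)
Definition rolling (rho : R) (n : nat) (P : nat -> vec3)
    (v : R -> vec3) (q : R -> quat) : Prop :=
  exists tt : nat -> R,
    traverses n P tt v /\
    q 0 = qone /\
    (forall t, 0 <= t <= 1 -> on_S3 (q t)) /\
    (forall i, (i < n)%nat -> qcont_on (tt i) (tt (S i)) q) /\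
    (forall i t, (i < n)%nat -> tt i < t < tt (S i) ->
       exists dv dq,
         vderive v t dv /\ qderive q t dq /\
         let w := qscale 2 (qmul dq (qconj (q t))) in
         qr w = 0 /\
         vscale (rho + 1) dv = cross (qim w) (v t) /\
         dot (qim w) (v t) = 0).

Definition trivial_lifted_monodromy (rho : R) (n : nat) (P : nat -> vec3) : Prop :=
  (exists v q, rolling rho n P v q) /\
  (forall v q, rolling rho n P v q -> q 1 = qone).

(** Along an edge from [a] to [b] the rolling equations leave no freedom: [omega] is
    orthogonal to [v] and [(rho+1) v' = omega x v], hence [omega = (rho+1) v x v'] is a
    multiple of the unit normal [u] of the great circle, so [q' = (rho+1)/2 phi' u q] and the
    edge multiplies [q] by [exp ((rho+1)/2 L u)], [L] the length of the edge.  Conversely these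
    formulas define a rolling curve, so the monodromy is trivial exactly when the ordered
    product of these edge rotations is [1].

    For [rho = 3] a quarter great circle contributes [exp (pi u) = -1] whatever [u], and an
    equatorial edge of length [D] contributes [exp (2 D k)].  A prefix of 0, 4 or 5 vertices
    followed by [m] copies of the triangle (base, B, north pole), with [B] on the equator at
    distance [D] from [base], realises every [n >= 6]; all its rotations are about [k], and [D]
    is chosen so that the total angle is a multiple of [2 pi]. *)

From Stdlib Require Import Reals Lra Lia Arith.
From Coquelicot Require Import Coquelicot.
Open Scope R_scope.

(** * Vectors and quaternions *)

Lemma vec3_ext a b : x1 a = x1 b -> x2 a = x2 b -> x3 a = x3 b -> a = b.
Proof. destruct a, b; simpl; intros -> -> ->; reflexivity. Qed.

Lemma quat_ext p q :
  qr p = qr q -> qi p = qi q -> qj p = qj q -> qk p = qk q -> p = q.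
Proof. destruct p, q; simpl; intros -> -> -> ->; reflexivity. Qed.

Lemma dot_comm a b : dot a b = dot b a.
Proof. unfold dot; ring. Qed.
Lemma dot_vscalel k a b : dot (vscale k a) b = k * dot a b.
Proof. unfold dot; simpl; ring. Qed.
Lemma dot_vscaler k a b : dot a (vscale k b) = k * dot a b.
Proof. unfold dot; simpl; ring. Qed.
Lemma dot_vaddl a b c : dot (vadd a b) c = dot a c + dot b c.
Proof. unfold dot; simpl; ring. Qed.
Lemma dot_vaddr a b c : dot a (vadd b c) = dot a b + dot a c.
Proof. unfold dot; simpl; ring. Qed.
Lemma dot_crossl a b : dot (cross a b) a = 0.
Proof. unfold dot; simpl; ring. Qed.
Lemma dot_crossr a b : dot (cross a b) b = 0.
Proof. unfold dot; simpl; ring. Qed.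
Lemma dot_cross_cross a b : dot (cross a b) (cross a b) = dot a a * dot b b - dot a b ^ 2.
Proof. unfold dot; simpl; ring. Qed.
Lemma cross_cross a b c : cross a (cross b c) = vadd (vscale (dot a c) b) (vscale (- dot a b) c).
Proof. apply vec3_ext; unfold dot; simpl; ring. Qed.
Lemma det3_cycle a b c : det3 a b c = det3 b c a.
Proof. unfold det3, dot; simpl; ring. Qed.

Lemma dot_self_eq0 a : dot a a = 0 -> a = V3 0 0 0.
Proof. unfold dot; intros H; apply vec3_ext; simpl; nra. Qed.

Lemma dot_sq_lt1_of_det3 a b c : dot a a = 1 -> dot b b = 1 -> det3 a b c <> 0 -> dot a b ^ 2 < 1.
Proof.
  intros ua ub hdet. apply Rnot_le_lt; intros Hle; apply hdet.
  assert (Hab : cross a b = V3 0 0 0).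
  { apply dot_self_eq0. pose proof (dot_cross_cross a b) as L. rewrite ua, ub in L.
    pose proof (Rle_0_sqr (x1 (cross a b))); pose proof (Rle_0_sqr (x2 (cross a b))).
    pose proof (Rle_0_sqr (x3 (cross a b))). unfold Rsqr, dot in *. lra. }
  rewrite det3_cycle, det3_cycle. unfold det3. rewrite Hab. unfold dot; simpl; ring.
Qed.

Definition qvec (u : vec3) : quat := Q 0 (x1 u) (x2 u) (x3 u).
Definition qnorm (q : quat) : R := qr q * qr q + qi q * qi q + qj q * qj q + qk q * qk q.
Definition qadd (p q : quat) : quat := Q (qr p + qr q) (qi p + qi q) (qj p + qj q) (qk p + qk q).
Definition qzero : quat := Q 0 0 0 0.

(** [qexp x u] is [exp (x u)] for a unit vector [u]. *)
Definition qexp (x : R) (u : vec3) : quat :=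
  Q (cos x) (sin x * x1 u) (sin x * x2 u) (sin x * x3 u).

Lemma qmulA p q r : qmul (qmul p q) r = qmul p (qmul q r).
Proof. apply quat_ext; simpl; ring. Qed.
Lemma qmul1q q : qmul qone q = q.
Proof. apply quat_ext; simpl; ring. Qed.
Lemma qmulq1 q : qmul q qone = q.
Proof. apply quat_ext; simpl; ring. Qed.
Lemma qnorm_qmul p q : qnorm (qmul p q) = qnorm p * qnorm q.
Proof. unfold qnorm; simpl; ring. Qed.
Lemma qmul_qconjK p q : qmul (qmul p (qconj q)) q = qscale (qnorm q) p.
Proof. unfold qnorm; apply quat_ext; simpl; ring. Qed.
Lemma qmulK_qconj p q : qmul (qmul p q) (qconj q) = qscale (qnorm q) p.
Proof. unfold qnorm; apply quat_ext; simpl; ring. Qed.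

Lemma qexp0 u : qexp 0 u = qone.
Proof. unfold qexp; rewrite cos_0, sin_0; apply quat_ext; simpl; ring. Qed.

Section UnitAxis.
Variable u : vec3.
Hypothesis unit_u : dot u u = 1.

Lemma qnorm_qexp x : qnorm (qexp x u) = 1.
Proof.
  unfold qnorm, qexp; simpl. pose proof (sin2_cos2 x) as H. unfold Rsqr, dot in *.
  transitivity (cos x * cos x + sin x * sin x * (x1 u * x1 u + x2 u * x2 u + x3 u * x3 u));
    [ring | rewrite unit_u; lra].
Qed.

Lemma qexpD x y : qmul (qexp x u) (qexp y u) = qexp (x + y) u.
Proof.
  unfold qexp, dot in *; rewrite cos_plus, sin_plus; apply quat_ext; simpl;
  [ transitivity (cos x * cos y - sin x * sin y * (x1 u * x1 u + x2 u * x2 u + x3 u * x3 u))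
  | | | ]; try ring; rewrite unit_u; ring.
Qed.

Lemma qvec_qexp x :
  qmul (qvec u) (qexp x u) = Q (- sin x) (cos x * x1 u) (cos x * x2 u) (cos x * x3 u).
Proof.
  unfold qexp, dot in *; apply quat_ext; simpl; try ring.
  transitivity (- sin x * (x1 u * x1 u + x2 u * x2 u + x3 u * x3 u)); [ring | rewrite unit_u; ring].
Qed.

End UnitAxis.

(** * Great-circle arcs *)

Definition arc_axis (a b : vec3) : vec3 := cross a (arcdir a b).

Section GreatCircleArc.
Variables a b : vec3.
Hypotheses (unit_a : dot a a = 1) (unit_b : dot b b = 1) (noncollinear : dot a b ^ 2 < 1).

Let sine := sqrt (1 - dot a b * dot a b).
Let sine_pos : 0 < sine.
Proof. apply sqrt_lt_R0; nra. Qed.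
Let sine_sq : sine * sine = 1 - dot a b * dot a b.
Proof. apply sqrt_sqrt; nra. Qed.

Lemma dot_arcdir : dot (arcdir a b) (arcdir a b) = 1.
Proof.
  unfold arcdir. fold sine.
  rewrite dot_vscalel, dot_vscaler, !dot_vaddl, !dot_vaddr, !dot_vscalel, !dot_vscaler,
    unit_a, unit_b, (dot_comm b a).
  transitivity (/ sine * (/ sine * (sine * sine))); [rewrite sine_sq; ring | field; lra].
Qed.

Lemma dot_arcdir_l : dot a (arcdir a b) = 0.
Proof. unfold arcdir. rewrite dot_vscaler, dot_vaddr, dot_vscaler, unit_a. ring. Qed.

Lemma dot_arc_axis : dot (arc_axis a b) (arc_axis a b) = 1.
Proof. unfold arc_axis. rewrite dot_cross_cross, unit_a, dot_arcdir, dot_arcdir_l. ring. Qed.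

Lemma dot_arc s : dot (arc a b s) (arc a b s) = 1.
Proof.
  unfold arc. rewrite !dot_vaddl, !dot_vaddr, !dot_vscalel, !dot_vscaler, unit_a, dot_arcdir,
    (dot_comm (arcdir a b) a), dot_arcdir_l.
  pose proof (sin2_cos2 s). unfold Rsqr in *. lra.
Qed.

Lemma dot_arc_axis_arc s : dot (arc_axis a b) (arc a b s) = 0.
Proof.
  unfold arc, arc_axis. rewrite dot_vaddr, !dot_vscaler, dot_crossl, dot_crossr. ring.
Qed.

Lemma arc0 : arc a b 0 = a.
Proof. unfold arc. rewrite cos_0, sin_0. apply vec3_ext; simpl; ring. Qed.

Lemma arc_arclen : arc a b (arclen a b) = b.
Proof.
  assert (Hab : -1 <= dot a b <= 1) by nra.
  unfold arc, arclen. rewrite cos_acos, sin_acos by exact Hab. unfold Rsqr.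
  unfold arcdir. fold sine. apply vec3_ext; simpl; field; lra.
Qed.

Lemma cross_arc_axis_arc s :
  cross (arc_axis a b) (arc a b s) = vadd (vscale (- sin s) a) (vscale (cos s) (arcdir a b)).
Proof.
  unfold arc, arc_axis.
  replace (cross (cross a (arcdir a b)) (vadd (vscale (cos s) a) (vscale (sin s) (arcdir a b))))
    with (vadd (vscale (- cos s) (cross a (cross a (arcdir a b))))
               (vscale (- sin s) (cross (arcdir a b) (cross a (arcdir a b)))))
    by (apply vec3_ext; simpl; ring).
  rewrite !cross_cross, unit_a, dot_arcdir, (dot_comm (arcdir a b) a), dot_arcdir_l.
  apply vec3_ext; simpl; ring.
Qed.

End GreatCircleArc.

(** * Derivatives and continuity on a closed interval *)

Lemma is_derive_eq (f : R -> R) (x d d' : R) : is_derive f x d -> d = d' -> is_derive f x d'.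
Proof. now intros H <-. Qed.
Lemma is_derive_Rconst (c x : R) : is_derive (fun _ => c) x 0.
Proof. exact (is_derive_const c x). Qed.
Lemma is_derive_Rplus (f g : R -> R) x df dg :
  is_derive f x df -> is_derive g x dg -> is_derive (fun t => f t + g t) x (df + dg).
Proof. exact (is_derive_plus f g x df dg). Qed.
Lemma is_derive_Rminus (f g : R -> R) x df dg :
  is_derive f x df -> is_derive g x dg -> is_derive (fun t => f t - g t) x (df - dg).
Proof. exact (is_derive_minus f g x df dg). Qed.
Lemma is_derive_Rmult (f g : R -> R) x df dg :
  is_derive f x df -> is_derive g x dg ->
  is_derive (fun t => f t * g t) x (df * g x + f x * dg).
Proof. intros Hf Hg. exact (is_derive_mult f g x df dg Hf Hg Rmult_comm). Qed.
Lemma is_derive_cos_comp (f : R -> R) x df :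
  is_derive f x df -> is_derive (fun t => cos (f t)) x (- sin (f x) * df).
Proof.
  intros Hf. eapply is_derive_eq; [exact (is_derive_comp cos f x _ df (is_derive_cos _) Hf)|].
  cbv [scal mult]; simpl; unfold mult; simpl; ring.
Qed.
Lemma is_derive_sin_comp (f : R -> R) x df :
  is_derive f x df -> is_derive (fun t => sin (f t)) x (cos (f x) * df).
Proof.
  intros Hf. eapply is_derive_eq; [exact (is_derive_comp sin f x _ df (is_derive_sin _) Hf)|].
  cbv [scal mult]; simpl; unfold mult; simpl; ring.
Qed.

Ltac derive_rules :=
  lazymatch goal with
  | |- is_derive (fun s => @?f s + @?g s) _ _ => apply (is_derive_Rplus f g); derive_rules
  | |- is_derive (fun s => @?f s - @?g s) _ _ => apply (is_derive_Rminus f g); derive_rules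
  | |- is_derive (fun s => @?f s * @?g s) _ _ => apply (is_derive_Rmult f g); derive_rules
  | |- is_derive (fun s => cos (@?f s)) _ _ => apply (is_derive_cos_comp f); derive_rules
  | |- is_derive (fun s => sin (@?f s)) _ _ => apply (is_derive_sin_comp f); derive_rules
  | _ => first [exact (is_derive_Rconst _ _) | eassumption]
  end.

Ltac derive_by_rules := eapply is_derive_eq; [derive_rules | cbv beta; ring].

Lemma vderive_arc a b (phi : R -> R) t dphi : dot a a = 1 -> dot b b = 1 -> dot a b ^ 2 < 1 ->
  is_derive phi t dphi ->
  vderive (fun s => arc a b (phi s)) t (vscale dphi (cross (arc_axis a b) (arc a b (phi t)))).
Proof.
  intros ua ub hab Hphi. rewrite cross_arc_axis_arc by assumption.
  unfold vderive, arc; cbn [x1 x2 x3 vadd vscale]; split; [|split]; derive_by_rules.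
Qed.

Lemma qderive_qmul (p q : R -> quat) t dp dq : qderive p t dp -> qderive q t dq ->
  qderive (fun s => qmul (p s) (q s)) t (qadd (qmul dp (q t)) (qmul (p t) dq)).
Proof.
  intros (H1 & H2 & H3 & H4) (G1 & G2 & G3 & G4).
  unfold qderive; cbn [qr qi qj qk qmul qadd]; split; [|split; [|split]]; derive_by_rules.
Qed.

Lemma qderive_qexp (f : R -> R) u t df : dot u u = 1 -> is_derive f t df ->
  qderive (fun s => qexp (f s) u) t (qscale df (qmul (qvec u) (qexp (f t) u))).
Proof.
  intros Hu Hf. rewrite qvec_qexp by exact Hu.
  unfold qderive, qexp; cbn [qr qi qj qk qscale]; split; [|split; [|split]]; derive_by_rules.
Qed.

Lemma qderive_eq q t dq dq' : qderive q t dq -> dq = dq' -> qderive q t dq'.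
Proof. now intros H <-. Qed.

Lemma qderive_const (c : quat) t : qderive (fun _ => c) t qzero.
Proof. split; [|split; [|split]]; apply is_derive_Rconst. Qed.

Lemma vderive_ext_loc (v w : R -> vec3) t dv :
  locally t (fun s => v s = w s) -> vderive v t dv -> vderive w t dv.
Proof.
  intros Hloc (H1 & H2 & H3); split; [|split]; eapply is_derive_ext_loc; try eassumption;
  apply (filter_imp _ _ (fun s (Hs : v s = w s) => f_equal _ Hs) Hloc).
Qed.

Lemma qderive_ext_loc (p q : R -> quat) t dq :
  locally t (fun s => p s = q s) -> qderive p t dq -> qderive q t dq.
Proof.
  intros Hloc (H1 & H2 & H3 & H4);
  split; [|split; [|split]]; eapply is_derive_ext_loc; try eassumption;
  apply (filter_imp _ _ (fun s (Hs : p s = q s) => f_equal _ Hs) Hloc).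
Qed.

Lemma is_derive_Runique (f : R -> R) (x d d' : R) : is_derive f x d -> is_derive f x d' -> d = d'.
Proof. intros H H'. now rewrite <- (is_derive_unique _ _ _ H), <- (is_derive_unique _ _ _ H'). Qed.

Lemma vderive_unique v t dv dv' : vderive v t dv -> vderive v t dv' -> dv = dv'.
Proof.
  intros (H1 & H2 & H3) (G1 & G2 & G3).
  apply vec3_ext; eapply is_derive_Runique; eassumption.
Qed.

Lemma locally_open_interval a b t (P : R -> Prop) : a < t < b ->
  (forall s, a < s < b -> P s) -> locally t P.
Proof.
  intros Ht HP. assert (Hr : 0 < Rmin (t - a) (b - t)) by (apply Rmin_pos; lra).
  exists (mkposreal _ Hr); intros s Hs; apply HP.
  change (Rabs (s - t) < Rmin (t - a) (b - t)) in Hs. apply Rabs_def2 in Hs.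
  pose proof (Rmin_l (t - a) (b - t)); pose proof (Rmin_r (t - a) (b - t)); lra.
Qed.

Section ClosedIntervalContinuity.
Variables a b : R.

Lemma rcont_on_ext (f g : R -> R) :
  (forall s, a <= s <= b -> f s = g s) -> rcont_on a b f -> rcont_on a b g.
Proof.
  intros Hfg Hf x Hx. rewrite <- (Hfg x Hx).
  exact (filterlim_within_ext _ f g Hfg (Hf x Hx)).
Qed.

Lemma rcont_on_continuous (f : R -> R) : (forall x, continuous f x) -> rcont_on a b f.
Proof. intros Hf x _. exact (filterlim_filter_le_1 f (filter_le_within _) (Hf x)). Qed.

Lemma rcont_on_derivable (f : R -> R) : (forall x, ex_derive f x) -> rcont_on a b f.
Proof. intros Hf. apply rcont_on_continuous. intros x. exact (ex_derive_continuous f x (Hf x)). Qed.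

Lemma rcont_on_comp (f g : R -> R) :
  (forall y, continuous g y) -> rcont_on a b f -> rcont_on a b (fun s => g (f s)).
Proof. intros Hg Hf x Hx. exact (filterlim_comp _ _ _ f g _ _ _ (Hf x Hx) (Hg (f x))). Qed.

Lemma rcont_on_plus (f g : R -> R) :
  rcont_on a b f -> rcont_on a b g -> rcont_on a b (fun s => f s + g s).
Proof.
  intros Hf Hg x Hx.
  exact (filterlim_comp_2 f g Rplus (Hf x Hx) (Hg x Hx)
    (@filterlim_plus _ R_NormedModule (f x) (g x))).
Qed.

Lemma rcont_on_mult (f g : R -> R) :
  rcont_on a b f -> rcont_on a b g -> rcont_on a b (fun s => f s * g s).
Proof.
  intros Hf Hg x Hx.
  exact (filterlim_comp_2 f g Rmult (Hf x Hx) (Hg x Hx) (@filterlim_mult R_AbsRing (f x) (g x))).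
Qed.

Lemma rcont_on_minus (f g : R -> R) :
  rcont_on a b f -> rcont_on a b g -> rcont_on a b (fun s => f s - g s).
Proof.
  intros Hf Hg. apply rcont_on_plus; [exact Hf|].
  apply (rcont_on_comp g Ropp); [exact (@filterlim_opp _ R_NormedModule) | exact Hg].
Qed.

End ClosedIntervalContinuity.

Ltac rcont_rules :=
  lazymatch goal with
  | |- rcont_on _ _ (fun s => @?f s + @?g s) => apply (rcont_on_plus _ _ f g); rcont_rules
  | |- rcont_on _ _ (fun s => @?f s - @?g s) => apply (rcont_on_minus _ _ f g); rcont_rules
  | |- rcont_on _ _ (fun s => @?f s * @?g s) => apply (rcont_on_mult _ _ f g); rcont_rules
  | |- rcont_on _ _ (fun s => cos (@?f s)) =>
      apply (rcont_on_comp _ _ f cos continuous_cos); rcont_rules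
  | |- rcont_on _ _ (fun s => sin (@?f s)) =>
      apply (rcont_on_comp _ _ f sin continuous_sin); rcont_rules
  | _ => first [eassumption | apply rcont_on_continuous; intros; apply continuous_const]
  end.

Lemma qcont_on_qmul a b p q :
  qcont_on a b p -> qcont_on a b q -> qcont_on a b (fun s => qmul (p s) (q s)).
Proof.
  intros (P1 & P2 & P3 & P4) (Q1 & Q2 & Q3 & Q4).
  unfold qcont_on; cbn [qr qi qj qk qmul]; split; [|split; [|split]]; rcont_rules.
Qed.

Lemma qcont_on_qexp a b f u : rcont_on a b f -> qcont_on a b (fun s => qexp (f s) u).
Proof.
  intros Hf. unfold qcont_on, qexp; cbn [qr qi qj qk]; split; [|split; [|split]]; rcont_rules.
Qed.

Lemma qcont_on_const a b c : qcont_on a b (fun _ => c).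
Proof. split; [|split; [|split]]; rcont_rules. Qed.

Lemma qcont_on_ext a b p q :
  (forall s, a <= s <= b -> p s = q s) -> qcont_on a b p -> qcont_on a b q.
Proof.
  intros Hpq (P1 & P2 & P3 & P4).
  assert (E : forall proj : quat -> R,
    rcont_on a b (fun s => proj (p s)) -> rcont_on a b (fun s => proj (q s))).
  { intros proj. apply rcont_on_ext. intros s Hs. now rewrite Hpq. }
  split; [|split; [|split]]; apply E; assumption.
Qed.

Definition clamp (a b s : R) : R := Rmax a (Rmin b s).

Lemma clamp_id a b s : a <= s <= b -> clamp a b s = s.
Proof. intros H. unfold clamp. rewrite Rmin_right, Rmax_right; lra. Qed.

Lemma filterlim_clamp a b x : a <= x <= b ->
  filterlim (clamp a b) (locally x) (within (fun s => a <= s <= b) (locally x)).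
Proof.
  intros Hx P [eps HP]. exists eps. intros y Hy. apply HP.
  - change (Rabs (clamp a b y - x) < eps). change (Rabs (y - x) < eps) in Hy.
    eapply Rle_lt_trans; [|exact Hy].
    unfold clamp, Rmax, Rmin; repeat destruct Rle_dec; unfold Rabs; repeat destruct Rcase_abs; lra.
  - unfold clamp, Rmax, Rmin; repeat destruct Rle_dec; lra.
Qed.

(** Extending [f] by constants outside [[a, b]] turns continuity within [[a, b]] into plain
    continuity, so that the mean value theorem applies. *)
Lemma eq_endpoints_of_derive0 (f : R -> R) a b : a < b -> rcont_on a b f ->
  (forall x, a < x < b -> is_derive f x 0) -> f b = f a.
Proof.
  intros Hab Hf Hd.
  destruct (MVT_gen (fun s => f (clamp a b s)) a b (fun _ => 0)) as (c & _ & Hc);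
    rewrite ?Rmin_left, ?Rmax_right by lra.
  - intros x Hx. apply (is_derive_ext_loc f); [|exact (Hd x Hx)].
    apply (locally_open_interval a b); [exact Hx|]. intros s Hs. now rewrite clamp_id by lra.
  - intros x Hx. apply continuity_pt_filterlim. rewrite (clamp_id a b x Hx).
    exact (filterlim_comp _ _ _ _ f _ _ _ (filterlim_clamp a b x Hx) (Hf x Hx)).
  - rewrite !clamp_id in Hc by lra. lra.
Qed.

Lemma qeq_endpoints_of_derive0 (q : R -> quat) a b : a < b -> qcont_on a b q ->
  (forall x, a < x < b -> qderive q x qzero) -> q b = q a.
Proof.
  intros Hab (C1 & C2 & C3 & C4) Hd.
  assert (E : forall proj : quat -> R, rcont_on a b (fun s => proj (q s)) ->
    (forall x, a < x < b -> is_derive (fun s => proj (q s)) x 0) -> proj (q b) = proj (q a))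
    by (intros proj; now apply eq_endpoints_of_derive0).
  apply quat_ext; apply E; try assumption; intros x Hx; apply (Hd x Hx).
Qed.

(** * Rolling along one edge *)

Definition rolling_ode (rho : R) (v : R -> vec3) (q : R -> quat) (t : R) : Prop :=
  exists dv dq, vderive v t dv /\ qderive q t dq /\
    let w := qscale 2 (qmul dq (qconj (q t))) in
    qr w = 0 /\ vscale (rho + 1) dv = cross (qim w) (v t) /\ dot (qim w) (v t) = 0.

Definition edge_rotation (rho : R) (a b : vec3) : quat :=
  qexp ((rho + 1) / 2 * arclen a b) (arc_axis a b).

Lemma cross_unit_perp v u : dot v v = 1 -> dot u v = 0 -> cross v (cross u v) = u.
Proof.
  intros Hv Hu. rewrite cross_cross, Hv, (dot_comm v u), Hu. apply vec3_ext; simpl; ring.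
Qed.

Lemma angular_velocity_of_rolling k v w dv : dot v v = 1 -> dot w v = 0 ->
  vscale k dv = cross w v -> w = vscale k (cross v dv).
Proof.
  intros Hv Hw Hroll. rewrite <- (cross_unit_perp v w Hv Hw), <- Hroll.
  apply vec3_ext; simpl; ring.
Qed.

Lemma qvec_qim q : qr q = 0 -> q = qvec (qim q).
Proof. destruct q; simpl; intros ->; reflexivity. Qed.

Lemma qderive_of_angular_velocity q dq w : qnorm q = 1 ->
  qscale 2 (qmul dq (qconj q)) = w -> dq = qscale (/ 2) (qmul w q).
Proof.
  intros Hq <-. replace (qmul (qscale 2 (qmul dq (qconj q))) q)
    with (qscale 2 (qmul (qmul dq (qconj q)) q)) by (apply quat_ext; simpl; ring).
  rewrite qmul_qconjK, Hq. apply quat_ext; simpl; field.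
Qed.

Section RollingAlongAnEdge.
Variables (rho : R) (a b : vec3) (t0 t1 : R) (phi : R -> R) (v : R -> vec3) (q : R -> quat).
Hypotheses (unit_a : dot a a = 1) (unit_b : dot b b = 1) (noncollinear : dot a b ^ 2 < 1)
  (t01 : t0 < t1) (phi_t0 : phi t0 = 0) (phi_t1 : phi t1 = arclen a b)
  (phi_cont : rcont_on t0 t1 phi) (phi_derivable : forall s, t0 < s < t1 -> ex_derive phi s)
  (v_arc : forall s, t0 <= s <= t1 -> v s = arc a b (phi s))
  (q_cont : qcont_on t0 t1 q) (q_unit : forall t, t0 <= t <= t1 -> on_S3 (q t))
  (q_rolls : forall t, t0 < t < t1 -> rolling_ode rho v q t).

Let u := arc_axis a b.
Let c := (rho + 1) / 2.

Lemma rolling_edge_qderive t : t0 < t < t1 ->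
  qderive q t (qscale (c * Derive phi t) (qmul (qvec u) (q t))).
Proof.
  intros Ht. destruct (q_rolls t Ht) as (dv & dq & Hv & Hq & Hw0 & Hw1 & Hw2).
  set (d := Derive phi t). set (w := qscale 2 (qmul dq (qconj (q t)))) in *.
  assert (Hphi : is_derive phi t d) by (apply Derive_correct, phi_derivable, Ht).
  assert (Hvt : v t = arc a b (phi t)) by (apply v_arc; lra).
  assert (Hunit_v : dot (v t) (v t) = 1) by (rewrite Hvt; apply dot_arc; assumption).
  assert (Hperp : dot u (v t) = 0) by (rewrite Hvt; apply dot_arc_axis_arc; assumption).
  assert (Hdv : dv = vscale d (cross u (v t))).
  { apply (vderive_unique v t); [exact Hv|]. rewrite Hvt.
    apply (vderive_ext_loc (fun s => arc a b (phi s))); [|now apply vderive_arc].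
    apply (locally_open_interval t0 t1); [exact Ht|]. intros s Hs. symmetry; apply v_arc; lra. }
  assert (Hw : qim w = vscale ((rho + 1) * d) u).
  { rewrite (angular_velocity_of_rolling _ _ _ _ Hunit_v Hw2 Hw1), Hdv.
    replace (cross (v t) (vscale d (cross u (v t)))) with (vscale d (cross (v t) (cross u (v t))))
      by (apply vec3_ext; simpl; ring).
    rewrite cross_unit_perp by assumption. apply vec3_ext; simpl; ring. }
  replace (qscale (c * d) (qmul (qvec u) (q t))) with dq; [exact Hq|].
  rewrite (qderive_of_angular_velocity (q t) dq w (q_unit t ltac:(lra)) eq_refl),
    (qvec_qim w Hw0), Hw.
  unfold c; clearbody u; apply quat_ext; simpl; field.
Qed.

Lemma rolling_edge_frame_derive t : t0 < t < t1 ->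
  qderive (fun s => qmul (qexp (- c * phi s) u) (q s)) t qzero.
Proof.
  intros Ht.
  assert (Hphi : is_derive phi t (Derive phi t)) by (apply Derive_correct, phi_derivable, Ht).
  assert (Hf : is_derive (fun s => - c * phi s) t (- c * Derive phi t)) by derive_by_rules.
  pose proof (qderive_qmul _ _ t _ _
    (qderive_qexp _ u t _ (dot_arc_axis a b unit_a unit_b noncollinear) Hf)
    (rolling_edge_qderive t Ht)) as H.
  (* The two terms cancel because [qvec u] commutes with [qexp _ u]. *)
  eapply qderive_eq; [exact H|].
  unfold qexp, qvec; clearbody u; apply quat_ext; simpl; ring.
Qed.

Lemma rolling_edge_endpoint : q t1 = qmul (edge_rotation rho a b) (q t0).
Proof.
  assert (Hframe : qmul (qexp (- c * phi t1) u) (q t1) = qmul (qexp (- c * phi t0) u) (q t0)).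
  { apply (qeq_endpoints_of_derive0 (fun s => qmul (qexp (- c * phi s) u) (q s)) t0 t1 t01);
      [|exact rolling_edge_frame_derive].
    apply qcont_on_qmul; [|exact q_cont]. apply qcont_on_qexp. rcont_rules. }
  rewrite phi_t0, phi_t1, Rmult_0_r, qexp0, qmul1q in Hframe.
  rewrite <- Hframe, <- qmulA. unfold edge_rotation; fold u c.
  rewrite qexpD by (apply dot_arc_axis; assumption).
  replace (c * arclen a b + - c * arclen a b) with 0 by ring. now rewrite qexp0, qmul1q.
Qed.

End RollingAlongAnEdge.

(** * Rolling along a polygon *)

Fixpoint path_holonomy (rho : R) (P : nat -> vec3) (k : nat) : quat :=
  match k with
  | O => qone
  | S j => qmul (edge_rotation rho (P j) (P k)) (path_holonomy rho P j)
  end.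

Definition polygon_holonomy (rho : R) (n : nat) (P : nat -> vec3) : quat :=
  path_holonomy rho (vert n P) n.

Lemma vert_unit n P i : nondeg_polygon n P -> dot (vert n P i) (vert n P i) = 1.
Proof. intros (Hn & Hunit & _). apply Hunit, Nat.mod_upper_bound. lia. Qed.

Lemma vert_noncollinear n P i : nondeg_polygon n P -> (i < n)%nat ->
  dot (vert n P i) (vert n P (S i)) ^ 2 < 1.
Proof.
  intros HP Hi. pose proof HP as (_ & _ & Hdet).
  apply (dot_sq_lt1_of_det3 _ _ (vert n P (i + 2))); try apply vert_unit; try assumption.
  rewrite <- Nat.add_1_r. exact (Hdet i Hi).
Qed.

Lemma increasing_le n (tt : nat -> R) : (forall i, (i < n)%nat -> tt i < tt (S i)) ->
  forall i j, (i <= j <= n)%nat -> tt i <= tt j.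
Proof.
  intros Hinc i j Hij. induction j as [|j IH].
  - replace i with 0%nat by lia. lra.
  - destruct (Nat.eq_dec i (S j)) as [->|Hne]; [lra|].
    apply (Rle_trans _ (tt j)); [apply IH; lia | left; apply Hinc; lia].
Qed.

Lemma rolling_endpoint rho n P v q : nondeg_polygon n P -> rolling rho n P v q ->
  q 1 = polygon_holonomy rho n P.
Proof.
  intros HP (tt & (Htt0 & Httn & Hinc & Hedge) & Hq0 & Hunit & Hcont & Hode).
  assert (Hrange : forall i, (i <= n)%nat -> 0 <= tt i <= 1).
  { intros i Hi. rewrite <- Htt0, <- Httn.
    split; [apply (increasing_le n tt Hinc 0 i) | apply (increasing_le n tt Hinc i n)]; lia. }
  enough (Hk : forall k, (k <= n)%nat -> q (tt k) = path_holonomy rho (vert n P) k)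
    by (rewrite <- Httn; apply Hk; lia).
  induction k as [|k IH]; intros Hk; [now rewrite Htt0, Hq0|].
  destruct (Hedge k ltac:(lia)) as (phi & Hphi0 & Hphi1 & _ & Hphic & Hphid & Hv).
  pose proof (Hrange k ltac:(lia)); pose proof (Hrange (S k) Hk).
  simpl path_holonomy. rewrite <- IH by lia.
  apply (rolling_edge_endpoint rho _ _ _ _ phi v); try assumption.
  - apply vert_unit; exact HP.
  - apply vert_unit; exact HP.
  - apply vert_noncollinear; [exact HP | lia].
  - apply Hinc; lia.
  - apply Hcont; lia.
  - intros t Ht. apply Hunit; lra.
  - intros t Ht. exact (Hode k t ltac:(lia) Ht).
Qed.

Fixpoint glue {A : Type} (tt : nat -> R) (f : nat -> R -> A) (k : nat) (s : R) : A :=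
  match k with
  | O => f O s
  | S j => if Rle_dec s (tt k) then glue tt f j s else f k s
  end.

Lemma glue_piece {A : Type} (tt : nat -> R) (f : nat -> R -> A) k :
  (forall i j, (i <= j)%nat -> tt i <= tt j) ->
  (forall j, (j < k)%nat -> f j (tt (S j)) = f (S j) (tt (S j))) ->
  forall i s, (i <= k)%nat -> tt i <= s <= tt (S i) -> glue tt f k s = f i s.
Proof.
  intros Hmono. induction k as [|k IH]; intros Hmatch i s Hi Hs; simpl.
  - now replace i with O by lia.
  - assert (IH' : forall i, (i <= k)%nat -> tt i <= s <= tt (S i) -> glue tt f k s = f i s)
      by (intros; apply IH; auto).
    destruct (Rle_dec s (tt (S k))) as [Hle|Hgt].
    + destruct (Nat.eq_dec i (S k)) as [->|Hne]; [|apply IH'; [lia | exact Hs]].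
      replace s with (tt (S k)) in * by lra.
      rewrite <- Hmatch by lia. apply IH'; [lia|]. split; [apply Hmono; lia | lra].
    + destruct (Nat.eq_dec i (S k)) as [->|Hne]; [reflexivity|].
      exfalso. pose proof (Hmono (S i) (S k) ltac:(lia)). lra.
Qed.

Lemma glue_ind {A : Type} (Pr : A -> Prop) (tt : nat -> R) (f : nat -> R -> A) k s :
  (forall j, (j <= k)%nat -> Pr (f j s)) -> Pr (glue tt f k s).
Proof.
  induction k as [|k IH]; intros Hf; simpl; [now apply Hf|].
  destruct Rle_dec; [apply IH; intros j Hj|]; apply Hf; lia.
Qed.

Lemma qnorm_path_holonomy rho P k :
  (forall j, (j < k)%nat -> dot (arc_axis (P j) (P (S j))) (arc_axis (P j) (P (S j))) = 1) ->
  qnorm (path_holonomy rho P k) = 1.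
Proof.
  induction k as [|k IH]; intros Hax; simpl.
  - unfold qnorm; simpl; ring.
  - rewrite qnorm_qmul. unfold edge_rotation. rewrite qnorm_qexp, IH by auto. ring.
Qed.

Section RollingExists.
Variables (rho : R) (n : nat) (P : nat -> vec3).
Hypothesis HP : nondeg_polygon n P.

Let V := vert n P.
Let c := (rho + 1) / 2.
Let len i := arclen (V i) (V (S i)).
Let axis i := arc_axis (V i) (V (S i)).

Let time (i : nat) : R := INR i / INR n.
Let angle (i : nat) (s : R) : R := len i * (INR n * s - INR i).
Let vpiece (i : nat) (s : R) : vec3 := arc (V i) (V (S i)) (angle i s).
Let qpiece (i : nat) (s : R) : quat := qmul (qexp (c * angle i s) (axis i)) (path_holonomy rho V i).

Let vroll : R -> vec3 := glue time vpiece (n - 1).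
Let qroll : R -> quat := glue time qpiece (n - 1).

Let n_pos : 0 < INR n.
Proof. destruct HP as (Hn & _). apply lt_0_INR. lia. Qed.

Let unit_V i : dot (V i) (V i) = 1.
Proof. exact (vert_unit n P i HP). Qed.

Let noncollinear_V i : (i < n)%nat -> dot (V i) (V (S i)) ^ 2 < 1.
Proof. exact (vert_noncollinear n P i HP). Qed.

Let unit_axis i : (i < n)%nat -> dot (axis i) (axis i) = 1.
Proof. intros Hi. apply dot_arc_axis; auto. Qed.

Let time_le i j : (i <= j)%nat -> time i <= time j.
Proof.
  intros Hij. apply Rmult_le_compat_r; [left; apply Rinv_0_lt_compat, n_pos | now apply le_INR].
Qed.

Let angle_start i : angle i (time i) = 0.
Proof. unfold angle, time. field_simplify; [ring | lra]. Qed.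

Let angle_end i : angle i (time (S i)) = len i.
Proof. unfold angle, time. rewrite S_INR. field. lra. Qed.

Let angle_derive i t : is_derive (angle i) t (len i * INR n).
Proof. unfold angle. auto_derive; trivial; ring. Qed.

Let on_piece i s : (i < n)%nat -> time i <= s <= time (S i) ->
  vroll s = vpiece i s /\ qroll s = qpiece i s.
Proof.
  intros Hi Hs. split; apply glue_piece; auto; try lia; intros j Hj.
  - unfold vpiece. rewrite angle_end, angle_start, arc0.
    apply arc_arclen, noncollinear_V; lia.
  - unfold qpiece. rewrite angle_end, angle_start, Rmult_0_r, qexp0, qmul1q. reflexivity.
Qed.

Let on_piece_interior i t : (i < n)%nat -> time i < t < time (S i) ->
  locally t (fun s => vroll s = vpiece i s /\ qroll s = qpiece i s).
Proof.
  intros Hi Ht. apply (locally_open_interval (time i) (time (S i))); [exact Ht|].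
  intros s Hs. apply on_piece; [exact Hi | lra].
Qed.

Let qnorm_qpiece i s : (i < n)%nat -> qnorm (qpiece i s) = 1.
Proof.
  intros Hi. unfold qpiece. rewrite qnorm_qmul, qnorm_qexp by auto.
  rewrite qnorm_path_holonomy; [ring|]. intros j Hj. apply unit_axis. lia.
Qed.

Lemma traverses_glue : traverses n P time vroll.
Proof.
  split; [|split; [|split]].
  - unfold time. simpl. unfold Rdiv. ring.
  - unfold time. field. lra.
  - intros i _. apply Rmult_lt_compat_r; [apply Rinv_0_lt_compat, n_pos | apply lt_INR; lia].
  - intros i Hi. exists (angle i). split; [apply angle_start|]. split; [apply angle_end|].
    split; [|split; [|split]].
    + intros s s' _ Hss' _. apply Rmult_le_compat_l; [apply acos_bound | nra].
    + apply rcont_on_derivable. intros x. eexists; apply angle_derive.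
    + intros s _. eexists; apply angle_derive.
    + intros s Hs. apply on_piece; assumption.
Qed.

Lemma qroll_unit t : on_S3 (qroll t).
Proof.
  apply (glue_ind (fun q => qnorm q = 1)). intros j Hj. apply qnorm_qpiece.
  destruct HP as (Hn & _). lia.
Qed.

Lemma qroll0 : qroll 0 = qone.
Proof.
  assert (H0 : time 0 = 0) by (unfold time; simpl; unfold Rdiv; ring).
  pose proof (time_le 0 1 ltac:(lia)). destruct HP as (Hn & _).
  rewrite <- H0, (proj2 (on_piece 0 (time 0) ltac:(lia) ltac:(lra))).
  unfold qpiece. rewrite angle_start, Rmult_0_r, qexp0. apply qmul1q.
Qed.

Lemma qroll_cont i : (i < n)%nat -> qcont_on (time i) (time (S i)) qroll.
Proof.
  intros Hi. apply (qcont_on_ext _ _ (qpiece i)).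
  - intros s Hs. symmetry. apply on_piece; assumption.
  - apply qcont_on_qmul; [|apply qcont_on_const]. apply qcont_on_qexp.
    apply rcont_on_derivable. intros x. unfold angle; auto_derive; trivial.
Qed.

Lemma rolling_ode_glue i t : (i < n)%nat -> time i < t < time (S i) ->
  rolling_ode rho vroll qroll t.
Proof.
  intros Hi Ht. pose proof (angle_derive i t) as Hangle. set (d := len i * INR n) in Hangle.
  destruct (on_piece i t Hi ltac:(lra)) as [Hv Hq].
  assert (Hc : is_derive (fun s => c * angle i s) t (c * d)) by derive_by_rules.
  exists (vscale d (cross (axis i) (vpiece i t))),
    (qscale (c * d) (qmul (qvec (axis i)) (qpiece i t))).
  split; [|split].
  - apply (vderive_ext_loc (vpiece i)).
    + eapply filter_imp; [|exact (on_piece_interior i t Hi Ht)]. intros s [Hs _]. now symmetry.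
    + apply vderive_arc; auto.
  - apply (qderive_ext_loc (qpiece i)).
    + eapply filter_imp; [|exact (on_piece_interior i t Hi Ht)]. intros s [_ Hs]. now symmetry.
    + eapply qderive_eq.
      { apply qderive_qmul; [|apply qderive_const].
        apply qderive_qexp; [apply unit_axis, Hi | exact Hc]. }
      unfold qpiece. apply quat_ext; simpl; ring.
  - cbv zeta. rewrite Hv, Hq.
    replace (qscale 2 (qmul (qscale (c * d) (qmul (qvec (axis i)) (qpiece i t)))
                            (qconj (qpiece i t))))
      with (qscale (2 * c * d) (qmul (qmul (qvec (axis i)) (qpiece i t)) (qconj (qpiece i t))))
      by (apply quat_ext; simpl; ring).
    rewrite qmulK_qconj, qnorm_qpiece by exact Hi.
    pose proof (dot_arc_axis_arc (V i) (V (S i)) (angle i t)) as Hperp.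
    fold (axis i) (vpiece i t) in Hperp. clearbody axis vpiece.
    unfold c, qim, dot in *; split; [simpl; ring | split].
    + apply vec3_ext; simpl; field.
    + simpl. transitivity ((rho + 1) * d * (x1 (axis i) * x1 (vpiece i t)
        + x2 (axis i) * x2 (vpiece i t) + x3 (axis i) * x3 (vpiece i t)));
        [field | rewrite Hperp; ring].
Qed.

Theorem rolling_exists : exists v q, rolling rho n P v q.
Proof.
  exists vroll, qroll, time. split; [exact traverses_glue|]. split; [exact qroll0|].
  split; [intros t _; apply qroll_unit|]. split; [exact qroll_cont|].
  exact rolling_ode_glue.
Qed.

End RollingExists.

Lemma trivial_lifted_monodromy_of_holonomy rho n P : nondeg_polygon n P ->
  polygon_holonomy rho n P = qone -> trivial_lifted_monodromy rho n P.
Proof.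
  intros HP Hhol. split; [exact (rolling_exists rho n P HP)|].
  intros v q Hroll. rewrite (rolling_endpoint rho n P v q HP Hroll). exact Hhol.
Qed.

(** * Polygons with trivial monodromy for [rho = 3] *)

Definition north : vec3 := V3 0 0 1.
Definition equator (x : R) : vec3 := V3 (cos x) (sin x) 0.

Lemma dot_north : dot north north = 1.
Proof. unfold dot, north; simpl; ring. Qed.

Lemma dot_equator x : dot (equator x) (equator x) = 1.
Proof. unfold dot, equator; simpl. pose proof (sin2_cos2 x). unfold Rsqr in *. lra. Qed.

Lemma qexp_2PI_mult (k : nat) u : qexp (2 * INR k * PI) u = qone.
Proof.
  unfold qexp. replace (2 * INR k * PI) with (0 + 2 * INR k * PI) by ring.
  rewrite cos_period, sin_period, cos_0, sin_0. apply quat_ext; simpl; ring.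
Qed.

Lemma edge_rotation3_perp a b : dot a b = 0 -> edge_rotation 3 a b = qexp PI north.
Proof.
  intros Hab. unfold edge_rotation, arclen. rewrite Hab, acos_0.
  replace ((3 + 1) / 2 * (PI / 2)) with PI by field.
  unfold qexp. rewrite sin_PI. apply quat_ext; simpl; ring.
Qed.

Lemma edge_rotation3_equator x D : 0 < D < PI ->
  edge_rotation 3 (equator x) (equator (x + D)) = qexp (2 * D) north.
Proof.
  intros HD. pose proof (sin_gt_0 D ltac:(lra) ltac:(lra)) as Hsin.
  assert (Hx : cos x * cos x + sin x * sin x = 1)
    by (pose proof (sin2_cos2 x); unfold Rsqr in *; lra).
  assert (Hdot : dot (equator x) (equator (x + D)) = cos D).
  { unfold dot, equator; simpl. rewrite cos_plus, sin_plus.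
    transitivity (cos D * (cos x * cos x + sin x * sin x)); [ring | rewrite Hx; ring]. }
  assert (Hsqrt : sqrt (1 - cos D * cos D) = sin D).
  { rewrite <- (sqrt_Rsqr (sin D)) by lra. f_equal.
    pose proof (sin2_cos2 D). unfold Rsqr in *. lra. }
  assert (Haxis : arc_axis (equator x) (equator (x + D)) = north).
  { unfold arc_axis, arcdir. rewrite Hdot, Hsqrt.
    unfold equator, north; apply vec3_ext; simpl; rewrite ?cos_plus, ?sin_plus; try ring.
    transitivity (/ sin D * sin D * (cos x * cos x + sin x * sin x));
      [ring | rewrite Hx; field; lra]. }
  unfold edge_rotation, arclen. rewrite Hdot, acos_cos, Haxis by lra.
  f_equal. field.
Qed.

Lemma path_holonomy_ext rho P P' k : (forall i, (i <= k)%nat -> P i = P' i) ->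
  path_holonomy rho P k = path_holonomy rho P' k.
Proof.
  induction k as [|k IH]; intros HPP'; simpl; [reflexivity|].
  rewrite !HPP', IH by (auto || lia). reflexivity.
Qed.

Definition base : vec3 := equator (- (PI / 4)).
Definition block (D : R) (j : nat) : vec3 :=
  match j with O => base | 1%nat => equator (- (PI / 4) + D) | _ => north end.
Definition with_blocks (s : nat) (pre : nat -> vec3) (D : R) (i : nat) : vec3 :=
  if (i <? s)%nat then pre i else block D ((i - s) mod 3).

Lemma with_blocks_at s pre D q r : with_blocks s pre D (s + (3 * q + r)) = block D (r mod 3).
Proof.
  unfold with_blocks. destruct (Nat.ltb_spec (s + (3 * q + r)) s); [lia|].
  f_equal. replace (s + (3 * q + r) - s)%nat with (r + q * 3)%nat by lia.
  apply Nat.Div0.mod_add.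
Qed.

Lemma det3_base_equator D y : det3 base (equator (- (PI / 4) + D)) y = x3 y * sin D.
Proof.
  unfold det3, dot, base, equator; simpl.
  transitivity (x3 y * sin ((- (PI / 4) + D) - - (PI / 4)));
    [rewrite sin_minus; ring | do 2 f_equal; ring].
Qed.

Lemma path_holonomy_blocks s pre D k : 0 < D < PI ->
  path_holonomy 3 (with_blocks s pre D) (s + 3 * k)
  = qmul (qexp (INR k * (2 * D + 2 * PI)) north) (path_holonomy 3 (with_blocks s pre D) s).
Proof.
  intros HD. induction k as [|k IH].
  - rewrite Nat.add_0_r. simpl. rewrite Rmult_0_l, qexp0. now rewrite qmul1q.
  - assert (Hat : forall r, with_blocks s pre D (r + (s + 3 * k)) = block D (r mod 3))
      by (intros r; rewrite Nat.add_comm, <- Nat.add_assoc; apply with_blocks_at).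
    replace (s + 3 * S k)%nat with (S (S (S (s + 3 * k)))) by lia. cbn [path_holonomy].
    rewrite (Hat 0%nat : with_blocks s pre D (s + 3 * k) = base),
      (Hat 1%nat : with_blocks s pre D (S (s + 3 * k)) = block D 1),
      (Hat 2%nat : with_blocks s pre D (S (S (s + 3 * k))) = north),
      (Hat 3%nat : with_blocks s pre D (S (S (S (s + 3 * k)))) = base), IH.
    unfold block, base.
    rewrite edge_rotation3_equator, !edge_rotation3_perp by
      (assumption || unfold dot, equator, north; simpl; ring).
    rewrite <- !qmulA, !qexpD by exact dot_north. f_equal. f_equal. rewrite S_INR. ring.
Qed.

Section PolygonWithBlocks.
Variables (s : nat) (pre : nat -> vec3) (D : R) (m : nat).
Hypotheses (D_range : 0 < D < PI) (m_pos : (1 <= m)%nat).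
Hypothesis starts_at_base : with_blocks s pre D 0 = base.
Hypothesis unit_pre : forall i, (i < s)%nat -> dot (pre i) (pre i) = 1.
Hypothesis det3_pre : forall i, (i < s)%nat ->
  det3 (with_blocks s pre D i) (with_blocks s pre D (i + 1)) (with_blocks s pre D (i + 2)) <> 0.
Hypothesis det3_wrap : det3 north base (with_blocks s pre D 1) <> 0.

Let n := (s + 3 * m)%nat.
Let P := with_blocks s pre D.

Let ends_at_base : P n = base.
Proof. unfold P, n. rewrite <- (Nat.add_0_r (3 * m)), with_blocks_at. reflexivity. Qed.

Let vert_with_blocks i : (i <= n)%nat -> vert n P i = P i.
Proof.
  intros Hi. unfold vert. destruct (Nat.eq_dec i n) as [->|Hne].
  - rewrite Nat.Div0.mod_same, ends_at_base. exact starts_at_base.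
  - rewrite Nat.mod_small by lia. reflexivity.
Qed.

Let vert_wrap : vert n P (n + 1) = P 1.
Proof.
  unfold vert. rewrite <- (Nat.mul_1_l n) at 1.
  rewrite Nat.add_comm, Nat.Div0.mod_add, Nat.mod_small by (unfold n; lia). reflexivity.
Qed.

Lemma with_blocks_nondeg : nondeg_polygon n P.
Proof.
  pose proof (sin_gt_0 D ltac:(lra) ltac:(lra)) as Hsin.
  split; [unfold n; lia | split].
  - intros i Hi. unfold P, with_blocks. destruct (Nat.ltb_spec i s); [now apply unit_pre|].
    unfold on_S2.
    destruct ((i - s) mod 3) as [|[|]]; simpl; first [apply dot_equator | apply dot_north].
  - intros i Hi. destruct (Nat.eq_dec (S i) n) as [Hlast|Hlast].
    + replace (i + 2)%nat with (n + 1)%nat by lia. rewrite vert_wrap.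
      rewrite !vert_with_blocks, Nat.add_1_r, Hlast, ends_at_base by lia.
      replace i with (s + (3 * (m - 1) + 2))%nat by (unfold n in *; lia).
      unfold P. rewrite with_blocks_at. exact det3_wrap.
    + rewrite !vert_with_blocks by lia.
      destruct (Nat.lt_ge_cases i s) as [Hpre|Hblk]; [now apply det3_pre|].
      replace i with (s + (3 * ((i - s) / 3) + (i - s) mod 3))%nat
        by (pose proof (Nat.div_mod (i - s) 3); lia).
      pose proof (Nat.mod_upper_bound (i - s) 3 ltac:(lia)).
      destruct ((i - s) mod 3) as [|[|[|r]]]; try lia; unfold P;
        rewrite <- !Nat.add_assoc, !with_blocks_at;
        cbv beta iota delta [Nat.modulo Nat.divmod Nat.add Nat.sub snd fst];
        unfold block;
        solve [ rewrite det3_base_equator; simpl; lra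
              | rewrite det3_cycle, det3_base_equator; simpl; lra
              | rewrite 2!det3_cycle, det3_base_equator; simpl; lra ].
Qed.

Lemma with_blocks_nondeg_trivial_monodromy alpha (K : nat) :
  path_holonomy 3 P s = qexp alpha north ->
  INR m * (2 * D + 2 * PI) + alpha = 2 * INR K * PI ->
  nondeg_polygon n P /\ trivial_lifted_monodromy 3 n P.
Proof.
  intros Hpre Hangle. split; [exact with_blocks_nondeg|].
  apply trivial_lifted_monodromy_of_holonomy; [exact with_blocks_nondeg|].
  unfold polygon_holonomy. rewrite (path_holonomy_ext 3 (vert n P) P n) by exact vert_with_blocks.
  unfold n, P in *.
  rewrite path_holonomy_blocks, Hpre, qexpD, Hangle by (exact D_range || exact dot_north).
  apply qexp_2PI_mult.
Qed.

End PolygonWithBlocks.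

Lemma exists_polygon_3m m : (2 <= m)%nat ->
  exists P, nondeg_polygon (3 * m) P /\ trivial_lifted_monodromy 3 (3 * m) P.
Proof.
  intros Hm. pose proof PI_RGT_0. assert (Hmr : 2 <= INR m) by (apply (le_INR 2); lia).
  set (D := PI / INR m).
  assert (HD : 0 < D < PI) by (unfold D; split; [apply Rdiv_lt_0_compat | apply Rlt_div_l]; nra).
  exists (with_blocks 0 (fun _ => base) D).
  apply (with_blocks_nondeg_trivial_monodromy 0 _ D m HD ltac:(lia) eq_refl)
    with (alpha := 0) (K := S m);
    try (intros; lia).
  - unfold with_blocks; simpl. rewrite det3_cycle, det3_base_equator. simpl.
    pose proof (sin_gt_0 D ltac:(lra) ltac:(lra)). lra.
  - simpl. now rewrite qexp0.
  - unfold D. rewrite S_INR. field. lra.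
Qed.

Definition isqrt2 : R := / sqrt 2.
Definition isqrt3 : R := / sqrt 3.

Lemma isqrt2_pos : 0 < isqrt2.
Proof. apply Rinv_0_lt_compat, sqrt_lt_R0. lra. Qed.
Lemma isqrt3_pos : 0 < isqrt3.
Proof. apply Rinv_0_lt_compat, sqrt_lt_R0. lra. Qed.
Lemma isqrt2_sq : isqrt2 * isqrt2 = / 2.
Proof. unfold isqrt2. rewrite <- Rinv_mult, sqrt_sqrt by lra. reflexivity. Qed.
Lemma isqrt3_sq : isqrt3 * isqrt3 = / 3.
Proof. unfold isqrt3. rewrite <- Rinv_mult, sqrt_sqrt by lra. reflexivity. Qed.

Lemma base_eq : base = V3 isqrt2 (- isqrt2) 0.
Proof.
  unfold base, equator. rewrite cos_neg, sin_neg, cos_PI4, sin_PI4.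
  unfold isqrt2, Rdiv. now rewrite Rmult_1_l.
Qed.

Lemma edge_rotation3_base_east : edge_rotation 3 base (V3 1 0 0) = qexp (PI / 2) north.
Proof.
  replace (V3 1 0 0) with (equator (- (PI / 4) + PI / 4)).
  - unfold base. rewrite edge_rotation3_equator; [f_equal; field | pose proof PI_RGT_0; lra].
  - replace (- (PI / 4) + PI / 4) with 0 by ring. unfold equator. now rewrite cos_0, sin_0.
Qed.

(** In both prefixes the first edge lies on the equator and has length [pi/4]; every later
    edge, including the one into the first block, is a quarter circle. *)
Definition prefix4 (i : nat) : vec3 :=
  match i with
  | 0 => base | 1 => V3 1 0 0 | 2 => V3 0 isqrt2 isqrt2 | _ => V3 isqrt3 isqrt3 (- isqrt3)
  end.

Definition prefix5 (i : nat) : vec3 :=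
  match i with
  | 0 => base | 1 => V3 1 0 0 | 2 => V3 0 isqrt2 isqrt2 | 3 => V3 0 isqrt2 (- isqrt2)
  | _ => V3 isqrt3 isqrt3 isqrt3
  end.

Ltac numeric :=
  pose proof isqrt2_pos; pose proof isqrt3_pos; pose proof isqrt2_sq; pose proof isqrt3_sq;
  rewrite ?base_eq; unfold det3, dot, cross; simpl; nra.

Lemma exists_polygon_3m_plus4 m : (1 <= m)%nat ->
  exists P, nondeg_polygon (4 + 3 * m) P /\ trivial_lifted_monodromy 3 (4 + 3 * m) P.
Proof.
  intros Hm. pose proof PI_RGT_0. assert (Hmr : 1 <= INR m) by (apply (le_INR 1); lia).
  set (D := PI / (4 * INR m)).
  assert (HD : 0 < D < PI) by (unfold D; split; [apply Rdiv_lt_0_compat | apply Rlt_div_l]; nra).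
  pose proof (sin_gt_0 D ltac:(lra) ltac:(lra)).
  exists (with_blocks 4 prefix4 D).
  apply (with_blocks_nondeg_trivial_monodromy 4 _ D m HD Hm eq_refl)
    with (alpha := PI / 2 + 3 * PI) (K := (m + 2)%nat).
  - intros i Hi. destruct i as [|[|[|[|]]]]; try lia; simpl; numeric.
  - intros i Hi. destruct i as [|[|[|[|]]]]; try lia; unfold with_blocks; simpl; try numeric.
    rewrite det3_cycle, det3_base_equator. simpl. pose proof isqrt3_pos. nra.
  - unfold with_blocks; simpl. numeric.
  - unfold with_blocks; simpl. rewrite edge_rotation3_base_east, !edge_rotation3_perp by numeric.
    rewrite qmulq1, !qexpD by exact dot_north. f_equal. ring.
  - unfold D. rewrite plus_INR. simpl. field. lra.
Qed.

Lemma exists_polygon_3m_plus5 m : (1 <= m)%nat ->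
  exists P, nondeg_polygon (5 + 3 * m) P /\ trivial_lifted_monodromy 3 (5 + 3 * m) P.
Proof.
  intros Hm. pose proof PI_RGT_0. assert (Hmr : 1 <= INR m) by (apply (le_INR 1); lia).
  set (D := 3 * PI / (4 * INR m)).
  assert (HD : 0 < D < PI) by (unfold D; split; [apply Rdiv_lt_0_compat | apply Rlt_div_l]; nra).
  pose proof (sin_gt_0 D ltac:(lra) ltac:(lra)).
  exists (with_blocks 5 prefix5 D).
  apply (with_blocks_nondeg_trivial_monodromy 5 _ D m HD Hm eq_refl)
    with (alpha := PI / 2 + 4 * PI) (K := (m + 3)%nat).
  - intros i Hi. destruct i as [|[|[|[|[|]]]]]; try lia; simpl; numeric.
  - intros i Hi. destruct i as [|[|[|[|[|]]]]]; try lia; unfold with_blocks; simpl; try numeric.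
    rewrite det3_cycle, det3_base_equator. simpl. pose proof isqrt3_pos. nra.
  - unfold with_blocks; simpl. numeric.
  - unfold with_blocks; simpl. rewrite edge_rotation3_base_east, !edge_rotation3_perp by numeric.
    rewrite qmulq1, !qexpD by exact dot_north. f_equal. ring.
  - unfold D. rewrite plus_INR. simpl. field. lra.
Qed.

Theorem corollary1 :
  forall n : nat, (6 <= n)%nat ->
    exists P : nat -> vec3,
      nondeg_polygon n P /\ trivial_lifted_monodromy 3 n P.
Proof.
  intros n Hn.
  pose proof (Nat.div_mod n 3 ltac:(lia)) as Hdiv.
  pose proof (Nat.mod_upper_bound n 3 ltac:(lia)) as Hmod.
  destruct (n mod 3) as [|[|[|]]] eqn:Hr; try lia.
  - replace n with (3 * (n / 3))%nat by lia. apply exists_polygon_3m. lia.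
  - replace n with (4 + 3 * (n / 3 - 1))%nat by lia. apply exists_polygon_3m_plus4. lia.
  - replace n with (5 + 3 * (n / 3 - 1))%nat by lia. apply exists_polygon_3m_plus5. lia.
Qed.
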